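(* Let $\mu$ be a $\sigma$-finite positive measure on $(\Omega,\mathcal B)$, written as $\mu=\mu_c+\mu_a$ where $\mu_c$ has no atoms and $\mu_a$ is purely atomic (so $\mu_c$ is the restriction of $\mu$ to the complement $C$ of the union of the atoms of $\mu$). Let $\nu$ be a $\sigma$-finite signed measure on $(\Omega,\mathcal B)$ satisfying condition $(\mathcal L)$ with respect to $\mu$. Then $\frac{d\nu}{d\mu_c}$ is constant, i.e. the restriction of $\nu$ to $C$ has Radon–Nikodym derivative with respect to $\mu_c$ which is $\mu_c$-a.e. equal to a constant.
   Context: A $\sigma$-finite signed measure is a countably additive extended-real-valued set function vanishing on $\emptyset$, taking at most one of the values $\pm\infty$, with $\sigma$-finite total variation. An atom of $\mu$ is a set $A\in\mathcal B$ with $\mu(A)>0$ such that every measurable $B\subset A$ has $\mu(B)\in\{0,\mu(A)\}$. $\nu$ satisfies $(\mathcal L)$ with respect to $\mu$ if for all $A,B\in\mathcal B$ with $\mu(A)=\mu(B)\neq\pm\infty$ one has $\nu(A)=\nu(B)\neq\pm\infty$. *)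

From mathcomp Require Import all_boot all_order all_algebra.
From mathcomp Require Import all_classical all_reals all_analysis.
Set Implicit Arguments. Unset Strict Implicit. Unset Printing Implicit Defensive.
Import Order.TTheory GRing.Theory Num.Theory.
Local Open Scope classical_set_scope.
Local Open Scope ring_scope.
Local Open Scope ereal_scope.

Definition is_atom d (T : measurableType d) (R : realType)
  (m : set T -> \bar R) (A : set T) : Prop :=
  [/\ measurable A, 0 < m A &
      forall B, measurable B -> B `<=` A -> m B = 0 \/ m B = m A].

Definition total_variation d (T : measurableType d) (R : realType)
  (nu : set T -> \bar R) (F : set T) : \bar R :=
  ereal_sup [set s | exists (n : nat) (B : nat -> set T),
     [/\ forall i, measurable (B i),
         forall i, B i `<=` F,
         trivIset `I_n B &
         s = \sum_(0 <= i < n) `| nu (B i) |]].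

Definition sigma_finite_signed_measure d (T : measurableType d) (R : realType)
  (nu : set T -> \bar R) : Prop :=
  [/\ nu set0 = 0,
      semi_sigma_additive nu,
      (forall A, measurable A -> nu A <> +oo) \/
      (forall A, measurable A -> nu A <> -oo) &
      sigma_finite setT (total_variation nu)].

Definition condition_L d (T : measurableType d) (R : realType)
  (mu nu : set T -> \bar R) : Prop :=
  forall A B, measurable A -> measurable B ->
    mu A = mu B -> mu A \is a fin_num ->
    nu A = nu B /\ nu A \is a fin_num.

(* Condition (L) makes nu a function of mu on sets of finite measure. On the
   atomless part C the measure mu takes every intermediate value on subsets
   (Sierpinski), so for B included in C with finite measure and
   a := nu(B) / mu(B), the positive and negative Hahn parts of the charge
   nu - a mu inside B can be matched by sets of equal mu-measure, hence equal
   value and opposite sign: both vanish, and nu = a mu on subsets of B.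
   Comparing two such B through their union shows that a does not depend on B,
   and sigma-finiteness extends nu = a mu to all measurable subsets of C. *)

From HB Require Import structures.
From mathcomp Require Import all_boot all_order all_algebra.
From mathcomp Require Import all_classical all_reals all_analysis.
From mathcomp Require Import lra.
Set Implicit Arguments.
Unset Strict Implicit.
Unset Printing Implicit Defensive.

Import Order.TTheory GRing.Theory Num.Theory.
Local Open Scope classical_set_scope.
Local Open Scope ring_scope.
Local Open Scope ereal_scope.

Lemma charge_of_fun d (T : measurableType d) (R : realType) (f : set T -> \bar R) :
  f set0 = 0 -> (forall A, measurable A -> f A \is a fin_num) ->
  semi_sigma_additive f -> {lm : {charge set T -> \bar R} | lm =1 f}.
Proof.
move=> f0 ffin fs.
by exists (HB.pack_for (charge T R) f (isCharge.Build _ _ _ f f0 ffin fs)).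
Qed.

Lemma semi_sigma_additive_setIr d (T : measurableType d) (R : realType)
    (f : set T -> \bar R) (B : set T) :
  measurable B -> semi_sigma_additive f -> semi_sigma_additive (fun A => f (A `&` B)).
Proof.
move=> mB fs F mF tF mUF; rewrite setI_bigcupl; apply: fs.
- by move=> i; exact: measurableI.
- exact: trivIset_setIr.
- by rewrite -setI_bigcupl; exact: measurableI.
Qed.

Lemma sigma_finite_proportional d (T : measurableType d) (R : realType)
    (mu : {measure set T -> \bar R}) (nu : set T -> \bar R) (c : R) (X : set T) :
  sigma_finite setT mu -> semi_sigma_additive nu -> measurable X ->
  (forall S, measurable S -> S `<=` X -> mu S < +oo -> nu S = c%:E * mu S) ->
  nu X = c%:E * mu X.
Proof.
move=> [F FT Ff] nu_sigma mX nuE.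
pose G i := X `&` seqDU F i.
have mG i : measurable (G i).
  by apply: measurableI => //; apply: seqDU_measurable => j; case: (Ff j).
have tG : trivIset setT G by exact: trivIset_setIl (trivIset_seqDU F).
have UG : \bigcup_i G i = X by rewrite -setI_bigcupr -seqDU_bigcup_eq -FT setIT.
have mUG : measurable (\bigcup_i G i) by rewrite UG.
have nu_sum : (fun n => \sum_(0 <= i < n) nu (G i)) =
              (fun n => c%:E * \sum_(0 <= i < n) mu (G i)).
  apply/funext => n; rewrite ge0_sume_distrr //; apply: eq_bigr => i _.
  apply: nuE => //; first by move=> x [].
  rewrite (le_lt_trans _ (proj2 (Ff i))) ?le_measure ?inE //; first by case: (Ff i).
  by move=> x [_]; exact: subset_seqDU.
have nu_cvg := nu_sigma _ mG tG mUG; rewrite nu_sum UG in nu_cvg.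
have mu_cvg := cvgeZl (y := c%:E) (fin_numE _)
  (@measure_semi_sigma_additive _ _ _ mu _ mG tG mUG).
rewrite UG in mu_cvg; exact: (cvg_unique _ nu_cvg mu_cvg).
Qed.

Local Open Scope charge_scope.

Section charge_null_subsets.
Context d (T : measurableType d) (R : realType) (lm : {charge set T -> \bar R}).

Lemma positive_set_charge0 P : lm.-positive_set P -> lm P = 0 ->
  forall S, measurable S -> S `<=` P -> lm S = 0.
Proof.
move=> [mP Ppos] P0 S mS SP.
have := chargeDI lm mP mS; rewrite P0 (setIidr SP) => /esym/eqP.
rewrite padde_eq0; first by case/andP => _ /eqP.
- by apply: Ppos; [exact: measurableD | move=> x []].
- exact: Ppos.
Qed.

Lemma negative_set_charge0 N : lm.-negative_set N -> lm N = 0 ->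
  forall S, measurable S -> S `<=` N -> lm S = 0.
Proof.
move=> [mN Nneg] N0 S mS SN.
have := chargeDI lm mN mS; rewrite N0 (setIidr SN) => /esym/eqP.
rewrite nadde_eq0; first by case/andP => _ /eqP.
- by apply: Nneg; [exact: measurableD | move=> x []].
- exact: Nneg.
Qed.

End charge_null_subsets.

Section nonatomic.
Context d (T : measurableType d) (R : realType) (mu : {measure set T -> \bar R}).
Variable C : set T.

Let fin_num_measure_sub B S : measurable B -> mu B < +oo -> measurable S -> S `<=` B ->
  mu S \is a fin_num.
Proof.
by move=> mB Bfin mS SB; rewrite ge0_fin_numE // (le_lt_trans _ Bfin) ?le_measure ?inE.
Qed.

Lemma no_atom_split : (forall A, ~ is_atom (fun B => mu (B `&` C)) A) ->
  forall A, measurable A -> A `<=` C -> 0 < mu A ->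
  exists B, [/\ measurable B, B `<=` A, 0 < mu B & mu B < mu A].
Proof.
move=> noatom A mA AC A0; apply: contrapT => noB; apply: (noatom A).
have inC X : X `<=` A -> X `&` C = X by move=> XA; apply/setIidl/(subset_trans XA).
split; rewrite ?inC //= => B mB BA; rewrite !inC //.
apply: contrapT => /not_orP[/eqP B0 /eqP BA']; apply: noB; exists B; split => //.
  by rewrite lt0e B0 measure_ge0.
by rewrite lt_neqAle BA' le_measure ?inE.
Qed.

Hypothesis mu_split : forall A, measurable A -> A `<=` C -> 0 < mu A ->
  exists B, [/\ measurable B, B `<=` A, 0 < mu B & mu B < mu A].

Lemma measure_halve A : measurable A -> A `<=` C -> 0 < mu A ->
  exists B, [/\ measurable B, B `<=` A, 0 < mu B & 2%:E * mu B <= mu A].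
Proof.
move=> mA AC A0; have [B [mB BA B0 BltA]] := mu_split mA AC A0.
have mAB : measurable (A `\` B) by exact: measurableD.
have muA : mu A = mu B + mu (A `\` B) by rewrite -measureU ?setDUK ?setDIK.
have [BleAB | ABltB] := leP (mu B) (mu (A `\` B)).
  by exists B; split; rewrite // mule_natl mule2n muA leeD2l.
exists (A `\` B); split => //.
- rewrite lt0e measure_ge0 andbT; apply: contraTneq BltA => AB0.
  by rewrite muA AB0 adde0 ltxx.
- by rewrite mule_natl mule2n muA leeD2r // ltW.
Qed.

Lemma measure_small_subset A (e : R) : measurable A -> A `<=` C ->
    0 < mu A -> mu A < +oo -> (0 < e)%R ->
  exists B, [/\ measurable B, B `<=` A, 0 < mu B & mu B < e%:E].
Proof.
move=> mA AC A0 Afin e0.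
have dyadic n : exists B, [/\ measurable B, B `<=` A, 0 < mu B &
    (2 ^+ n)%:E * mu B <= mu A].
  elim: n => [|n [B [mB BA B0 hB]]]; first by exists A; split; rewrite // expr0 mul1e.
  have [B' [mB' B'B B'0 hB']] := measure_halve mB (subset_trans BA AC) B0.
  exists B'; split => //; first exact: subset_trans B'B BA.
  rewrite exprSr EFinM -muleA (le_trans _ hB) //.
  by apply: lee_wpmul2l; rewrite // lee_fin exprn_ge0.
have Afin' : mu A \is a fin_num by rewrite ge0_fin_numE.
pose n := Num.Def.archi_bound (fine (mu A) / e).
have [B [mB BA B0 hB]] := dyadic n.
exists B; split => //.
have pow_gt0 : (0 < 2 ^+ n :> R)%R by exact: exprn_gt0.
rewrite -(@lte_pmul2l _ (2 ^+ n)%:E) ?lte_fin // (le_lt_trans hB) // -EFinM.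
rewrite -[mu A]fineK // lte_fin -ltr_pdivrMr //.
apply: (lt_le_trans (archi_boundP _)); first by rewrite divr_ge0 ?fine_ge0 ?ltW.
by rewrite -natrX ler_nat ltnW // ltn_expl.
Qed.

Section intermediate_value.
Variables (A : set T) (t : R).
Hypotheses (mA : measurable A) (AC : A `<=` C) (Afin : mu A < +oo)
  (t0 : (0 <= t)%R) (tA : t%:E <= mu A).

Let muA_fin X : measurable X -> X `<=` A -> mu X \is a fin_num.
Proof. exact: fin_num_measure_sub. Qed.

Let admissible E F := [/\ measurable F, F `<=` A `\` E & mu E + mu F <= t%:E].

Let greedy_step E : exists F, mu E <= t%:E ->
  admissible E F /\ forall G, admissible E G -> mu G <= 2%:E * mu F.
Proof.
have [Et|] := boolP (mu E <= t%:E); last by exists set0.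
pose s := ereal_sup [set mu F | F in admissible E].
have adm0 : admissible E set0 by split; rewrite // measure0 adde0.
have s_ub G : admissible E G -> mu G <= s.
  by move=> admG; apply: ereal_sup_ubound; exists G.
have s_ge0 : 0 <= s by rewrite -(measure0 mu) s_ub.
have s_fin : s \is a fin_num.
  rewrite ge0_fin_numE // (le_lt_trans _ Afin) // ge_ereal_sup // => _ [G [mG GA _] <-].
  by rewrite le_measure ?inE // => x /GA[].
have [s0|s_gt0] := eqVneq s 0.
  by exists set0 => _; split => // G /s_ub; rewrite s0 measure0 mule0.
have half_lt : (fine s / 2)%:E < s.
  rewrite -[ltRHS]fineK // lte_fin ltr_pdivrMr // ltr_pMr ?ltr1n //.
  by rewrite fine_gt0 // lt0e s_gt0 s_ge0 /= -ge0_fin_numE.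
have [_ [F admF <-] sF] := ereal_sup_gt half_lt.
have muF_fin : mu F \is a fin_num.
  by case: admF => mF FA _; apply: muA_fin => // x /FA[].
exists F => _; split => // G /s_ub Gs; apply: (le_trans Gs).
set σ := fine s in sF; move: sF.
rewrite -(fineK s_fin) -(fineK muF_fin) -EFinM lte_fin lee_fin -/σ => ?; lra.
Qed.

Let next E := sval (cid (greedy_step E)).
Let nextP E : mu E <= t%:E ->
  admissible E (next E) /\ forall G, admissible E G -> mu G <= 2%:E * mu (next E).
Proof. exact: svalP (cid (greedy_step E)). Qed.

Let E n := iter n (fun X => X `|` next X) set0.

Let muES n : measurable (E n) -> mu (E n) <= t%:E ->
  mu (E n.+1) = mu (E n) + mu (next (E n)).
Proof.
move=> mE Et; have [[mF FAE _] _] := nextP Et.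
by rewrite /= measureU //; apply/seteqP; split => // x [En /FAE[]].
Qed.

Let E_spec n : [/\ measurable (E n), E n `<=` A & mu (E n) <= t%:E].
Proof.
elim: n => [|n [mE EA Et]]; first by split; rewrite //= measure0.
have [[mF FAE Ft] _] := nextP Et.
split; [exact: measurableU | by rewrite /= subUset; split => // x /FAE[] | by rewrite muES].
Qed.

Let U := \bigcup_n E n.

Let mU : measurable U. Proof. by apply: bigcupT_measurable => n; case: (E_spec n). Qed.

Let UA : U `<=` A. Proof. by apply: bigcup_sub => n _; case: (E_spec n). Qed.

Let muU_le : mu U <= t%:E.
Proof.
have mE n : measurable (E n) by case: (E_spec n).
have E_nd : {homo E : n m / (n <= m)%N >-> (n <= m)%O}.
  by apply/nondecreasing_seqP => n; rewrite subsetEset; exact: subsetUl.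
have cvgE := @nondecreasing_cvg_mu _ _ _ mu _ mE mU E_nd.
rewrite -(cvg_lim _ cvgE) //; apply: lime_le; first by apply/cvg_ex; exists (mu U).
by apply: nearW => n /=; case: (E_spec n).
Qed.

Let admissible_lower_bound G : (forall n, admissible (E n) G) ->
  forall n, n%:R%:E * mu G <= 2%:E * mu (E n).
Proof.
move=> admG; elim=> [|n IH]; first by rewrite mul0e mule_ge0.
have [mE _ Et] := E_spec n; have [_ nextmax] := nextP Et.
rewrite muES // ge0_muleDr // -natr1 EFinD ge0_muleDl // mul1e.
exact: leeD IH (nextmax _ (admG n)).
Qed.

Lemma measure_intermediate_value : exists B, [/\ measurable B, B `<=` A & mu B = t%:E].
Proof.
(* If mu U < t, a small G included in A `\` U is admissible at every step, so
   each step adds at least mu G / 2 and mu (E n) is unbounded. *)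
exists U; split => //; apply/eqP; rewrite eq_le muU_le /= leNgt; apply/negP => Ult.
have [u Uu] : exists u, mu U = u%:E by exists (fine (mu U)); rewrite fineK ?muA_fin.
have [a Aa] : exists a, mu A = a%:E by exists (fine (mu A)); rewrite fineK ?muA_fin.
rewrite Uu lte_fin in Ult; have ta : (t <= a)%R by rewrite -lee_fin -Aa.
have mD : measurable (A `\` U) by exact: measurableD.
have D_gt0 : 0 < mu (A `\` U).
  rewrite measureD // setIidr // [X in 0 < X - _]Aa [X in 0 < _ - X]Uu.
  by rewrite -EFinB lte_fin subr_gt0 (lt_le_trans Ult ta).
have DA : A `\` U `<=` A by exact: subDsetl.
have Dfin : mu (A `\` U) < +oo by rewrite (le_lt_trans _ Afin) ?le_measure ?inE.
have [G [mG GD G0 Gsmall]] := measure_small_subset (e := (t - u)%R) mD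
  (subset_trans DA AC) D_gt0 Dfin ltac:(by rewrite subr_gt0).
have admG n : admissible (E n) G.
  split => //; first by move=> x /GD[Ax nUx]; split => // Enx; apply: nUx; exists n.
  rewrite -(subrKC u t) EFinD -Uu; apply: leeD; last exact: ltW.
  by rewrite le_measure ?inE //; [case: (E_spec n) | move=> x Enx; exists n].
have [g Gg] : exists g, mu G = g%:E.
  by exists (fine (mu G)); rewrite fineK ?muA_fin // => x /GD[].
rewrite Gg lte_fin in G0.
pose n := Num.Def.archi_bound (2 * t / g).
have := admissible_lower_bound admG n; have [_ _] := E_spec n.
rewrite Gg -EFinM => /(lee_wpmul2l (lee0n 2)) /(le_trans _) /[apply].
rewrite -EFinM lee_fin -ler_pdivlMr // leNgt => /negP; apply.
exact: archi_boundP (divr_ge0 (mulr_ge0 _ t0) (ltW G0)).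
Qed.
End intermediate_value.

Variable nu : set T -> \bar R.
Hypotheses (nuL : condition_L mu nu) (nu0 : nu set0 = 0)
  (nu_sigma : semi_sigma_additive nu).

Lemma proportional_charge B (a : R) : measurable B -> mu B < +oo ->
  {lm : {charge set T -> \bar R} | forall S, lm S = nu (S `&` B) - a%:E * mu (S `&` B)}.
Proof.
move=> mB Bfin.
have muB_fin S : measurable S -> mu (S `&` B) \is a fin_num.
  by move=> mS; apply: (fin_num_measure_sub mB) => //; exact: measurableI.
have nuB_fin S : measurable S -> nu (S `&` B) \is a fin_num.
  move=> mS; have mSB := measurableI _ _ mS mB.
  by case: (nuL mSB mSB erefl (muB_fin _ mS)).
have [nuB nuBE] := @charge_of_fun _ _ _ (fun S => nu (S `&` B))
  ltac:(by rewrite /= set0I) nuB_fin (semi_sigma_additive_setIr mB nu_sigma).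
have [muB muBE] := @charge_of_fun _ _ _ (fun S => mu (S `&` B))
  ltac:(by rewrite /= set0I measure0) muB_fin
  (semi_sigma_additive_setIr mB (@measure_semi_sigma_additive _ _ _ mu)).
exists (cadd nuB (cscale (- a) muB)) => S.
rewrite /= /cadd /= nuBE /cscale EFinN mulNe.
by congr (_ - (_ * _)); exact: muBE.
Qed.

Lemma measure_determined_charge0 (lm : {charge set T -> \bar R}) B :
  measurable B -> B `<=` C -> mu B < +oo ->
  (forall S S', measurable S -> measurable S' -> S `<=` B -> S' `<=` B ->
     mu S = mu S' -> lm S = lm S') ->
  lm B = 0 -> forall S, measurable S -> S `<=` B -> lm S = 0.
Proof.
move=> mB BC Bfin lm_mu lmB.
have transfer X Y : measurable X -> measurable Y -> X `<=` B -> Y `<=` B ->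
    mu X <= mu Y -> exists S, [/\ measurable S, S `<=` Y & lm X = lm S].
  move=> mX mY XB YB XY.
  have /fineK muX := fin_num_measure_sub mB Bfin mX XB.
  have Yfin : mu Y < +oo by rewrite (le_lt_trans _ Bfin) ?le_measure ?inE.
  have [S [mS SY muS]] := measure_intermediate_value mY (subset_trans YB BC) Yfin
    (fine_ge0 (measure_ge0 mu X)) ltac:(by rewrite muX).
  exists S; split => //; apply: lm_mu => //; first exact: subset_trans SY YB.
  by rewrite muS muX.
have [P [N [[mP Ppos] [mN Nneg] PNT PN0]]] := Hahn_decomposition lm.
have mBP : measurable (B `&` P) by exact: measurableI.
have mBN : measurable (B `&` N) by exact: measurableI.
have BP_ge0 : 0 <= lm (B `&` P) by apply: Ppos => //; exact: subIsetr.
have BN_le0 : lm (B `&` N) <= 0 by apply: Nneg => //; exact: subIsetr.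
have lmBPN := charge_partition lm mB mP mN PNT PN0; rewrite lmB in lmBPN.
(* The Hahn part of smaller measure has the same lm-value as a subset of the
   other part, so its value is of both signs. *)
have [BP0 BN0] : lm (B `&` P) = 0 /\ lm (B `&` N) = 0.
  have [BPN|BNP] := leP (mu (B `&` P)) (mu (B `&` N)).
    have [S [mS SBN lmS]] := transfer _ _ mBP mBN (@subIsetl _ B P) (@subIsetl _ B N) BPN.
    have BP0 : lm (B `&` P) = 0.
      by apply/eqP; rewrite eq_le BP_ge0 andbT lmS; apply: Nneg => // x /SBN[].
    by split => //; move: lmBPN; rewrite BP0 add0e.
  have [S [mS SBP lmS]] := transfer _ _ mBN mBP (@subIsetl _ B N) (@subIsetl _ B P) (ltW BNP).
  have BN0 : lm (B `&` N) = 0.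
    by apply/eqP; rewrite eq_le BN_le0 lmS; apply: Ppos => // x /SBP[].
  by split => //; move: lmBPN; rewrite BN0 adde0.
have posBP : lm.-positive_set (B `&` P).
  by split => // A mA ABP; apply: Ppos => // x /ABP[].
have negBN : lm.-negative_set (B `&` N).
  by split => // A mA ABN; apply: Nneg => // x /ABN[].
move=> S mS SB; rewrite (charge_partition lm mS mP mN PNT PN0).
rewrite (positive_set_charge0 posBP BP0 (measurableI _ _ mS mP)); last exact: setSI.
by rewrite (negative_set_charge0 negBN BN0 (measurableI _ _ mS mN)) ?adde0 //; exact: setSI.
Qed.

Lemma condition_L_proportional_on B (a : R) : measurable B -> B `<=` C -> mu B < +oo ->
  nu B = a%:E * mu B -> forall S, measurable S -> S `<=` B -> nu S = a%:E * mu S.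
Proof.
move=> mB BC Bfin nuB S mS SB.
have [lm lmE] := proportional_charge a mB Bfin.
have lmE' X : X `<=` B -> lm X = nu X - a%:E * mu X by move=> XB; rewrite lmE setIidl.
have lmS : lm S = 0.
  apply: (measure_determined_charge0 mB BC Bfin) => //.
    move=> X X' mX mX' XB X'B muXX'; rewrite !lmE' // muXX'.
    by case: (nuL mX mX' muXX' (fin_num_measure_sub mB Bfin mX XB)) => ->.
  by rewrite lmE' // nuB subee // fin_numM // (fin_num_measure_sub mB Bfin mB).
have muS_fin := fin_num_measure_sub mB Bfin mS SB.
by rewrite -[nu S](@subeK _ _ (a%:E * mu S)) ?fin_numM // -lmE' // lmS add0e.
Qed.

Let nu_ratio B : measurable B -> 0 < mu B -> mu B < +oo ->
  nu B = (fine (nu B) / fine (mu B))%:E * mu B.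
Proof.
move=> mB B0 Bfin; have muB_fin : mu B \is a fin_num by rewrite ge0_fin_numE.
have [_ nuB_fin] := nuL mB mB erefl muB_fin.
by rewrite -[in RHS](fineK muB_fin) -EFinM divfK ?fineK // gt_eqF // fine_gt0 // B0 Bfin.
Qed.

Lemma condition_L_proportional : exists c : R, forall S, measurable S -> S `<=` C ->
  mu S < +oo -> nu S = c%:E * mu S.
Proof.
have [[B0 [mB0 B0C B0_gt0 B0fin]]|noB] :=
  pselect (exists B, [/\ measurable B, B `<=` C, 0 < mu B & mu B < +oo]); last first.
  exists 0%R => S mS SC Sfin; rewrite mul0e.
  have S0 : mu S = 0.
    apply/eqP; rewrite eq_le measure_ge0 andbT leNgt; apply/negP => S_gt0.
    by apply: noB; exists S.
  by have [-> _] := nuL mS measurable0 ltac:(by rewrite S0 measure0) ltac:(by rewrite S0).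
exists (fine (nu B0) / fine (mu B0))%R => S mS SC Sfin.
have mB : measurable (S `|` B0) by exact: measurableU.
have BC : S `|` B0 `<=` C by rewrite subUset.
have Bfin : mu (S `|` B0) < +oo.
  by rewrite (le_lt_trans (measureU2 _ mS mB0)) // lte_add_pinfty.
have B_gt0 : 0 < mu (S `|` B0) by rewrite (lt_le_trans B0_gt0) ?le_measure ?inE.
have nuB := condition_L_proportional_on mB BC Bfin (nu_ratio mB B_gt0 Bfin).
rewrite (nuB S mS (@subsetUl _ S B0)); congr (_%:E * _).
have := nuB B0 mB0 (@subsetUr _ S B0); rewrite {1}(nu_ratio mB0 B0_gt0 B0fin).
have [m B0m] : exists m, mu B0 = m%:E.
  by exists (fine (mu B0)); rewrite fineK ?ge0_fin_numE.
rewrite B0m lte_fin in B0_gt0 *; rewrite -!EFinM /= => -[] /mulIf -> //.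
by rewrite gt_eqF.
Qed.

End nonatomic.

Theorem proposition1p4 (d : measure_display) (T : measurableType d)
  (R : realType) (mu : {measure set T -> \bar R}) (nu : set T -> \bar R)
  (C : set T) :
  sigma_finite setT mu ->
  (* C measurable; mu_c := mu restricted to C has no atoms *)
  measurable C ->
  (forall A, ~ is_atom (fun B => mu (B `&` C)) A) ->
  (* mu_a := mu restricted to ~C is purely atomic: concentrated on a
     countable family of its atoms *)
  (exists (I : set nat) (At : nat -> set T),
     (forall n, I n -> is_atom (fun B => mu (B `&` ~` C)) (At n)) /\
     mu ((~` \bigcup_(n in I) At n) `&` ~` C) = 0) ->
  sigma_finite_signed_measure nu ->
  condition_L mu nu ->
  (* d(nu|_C)/d(mu_c) exists and is mu_c-a.e. equal to a constant *)
  exists (c : R) (f : T -> R),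
    [/\ measurable_fun setT f,
        (forall A, measurable A ->
           nu (A `&` C) = \int[mu]_(x in A `&` C) (f x)%:E) &
        {ae mu, forall x, C x -> f x = c}].
Proof.
move=> mu_sfin mC noatom _ [nu0 nu_sigma _ _] nuL.
have [c nuE] := condition_L_proportional (no_atom_split noatom) nuL nu0 nu_sigma.
exists c, (fun _ => c); split; [exact: measurable_cst | move=> A mA | exact: aeW].
rewrite integral_cst; last exact: measurableI.
apply: sigma_finite_proportional => //; first exact: measurableI.
by move=> S mS SAC; apply: nuE => // x /SAC[].
Qed.
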